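(* For any real $n\times n$ matrix $A$ there exist an integer $m$, a purely competitive $m\times m$ real matrix $B$, and an injective linear map $T:\mathbb R^n\to\mathbb R^m$ such that $TA=BT$.
   Context: A square real matrix $B$ is competitive if $B_{ij}\le 0$ for all $i\ne j$, and purely competitive if it is competitive and additionally $B_{ii}=0$ for all $i$. *)

From mathcomp Require Import all_boot all_order all_algebra.
From mathcomp Require Import reals.
Set Implicit Arguments. Unset Strict Implicit. Unset Printing Implicit Defensive.
Import GRing.Theory Num.Theory.
Local Open Scope ring_scope.

Definition competitive (R : realType) (m : nat) (B : 'M[R]_m) : Prop :=
  forall i j : 'I_m, i != j -> B i j <= 0.

Definition purely_competitive (R : realType) (m : nat) (B : 'M[R]_m) : Prop :=
  competitive B /\ forall i : 'I_m, B i i = 0.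

From mathcomp Require Import all_boot all_order all_algebra.
From mathcomp Require Import reals.
Set Implicit Arguments. Unset Strict Implicit. Unset Printing Implicit Defensive.
Import Order.TTheory GRing.Theory Num.Theory.
Local Open Scope ring_scope.

(* Split A = P - N into entrywise nonnegative parts.  The embedding
   T = [I; -I] intertwines P - N with [[P, N], [N, P]] for any P and N; taking
   P = 0 and N = -M it also intertwines any M with [[0, -M], [-M, 0]], which is
   purely competitive as soon as M is entrywise nonnegative.  Applying this to
   M = [[P, N], [N, P]] and composing the two embeddings gives m = 4n. *)

Section Embeddings.
Variable R : pzRingType.

Definition mx_embeds n m (A : 'M[R]_n) (B : 'M[R]_m) : Prop :=
  exists T : 'M[R]_(m, n),
    injective (fun v : 'cV[R]_n => T *m v) /\ T *m A = B *m T.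

Lemma mx_embeds_trans n m k (A : 'M[R]_n) (B : 'M[R]_m) (C : 'M[R]_k) :
  mx_embeds A B -> mx_embeds B C -> mx_embeds A C.
Proof.
case=> S [injS SA] [T [injT TB]]; exists (T *m S); split.
- by move=> u v /=; rewrite -!mulmxA => /injT /injS.
- by rewrite -mulmxA SA !mulmxA TB.
Qed.

Lemma mx_embeds_block_sub k (P N : 'M[R]_k) :
  mx_embeds (P - N) (block_mx P N N P).
Proof.
exists (col_mx 1%:M (- 1%:M)); split.
- by move=> u v /= /(congr1 usubmx); rewrite !mul_col_mx !col_mxKu !mul1mx.
- rewrite mul_block_col mul_col_mx !mulNmx !mul1mx !mulmxN !mulmx1.
  by rewrite opprB.
Qed.

Lemma mx_embeds_antidiag k (M : 'M[R]_k) :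
  mx_embeds M (block_mx 0 (- M) (- M) 0).
Proof. by have := mx_embeds_block_sub 0 (- M); rewrite sub0r opprK. Qed.

End Embeddings.

Section BlockEntries.
Variables (T : Type) (Q : T -> Prop).

Lemma block_mx_forall m1 m2 n1 n2 (Aul : 'M[T]_(m1, n1)) (Aur : 'M[T]_(m1, n2))
    (Adl : 'M[T]_(m2, n1)) (Adr : 'M[T]_(m2, n2)) :
  (forall i j, Q (Aul i j)) -> (forall i j, Q (Aur i j)) ->
  (forall i j, Q (Adl i j)) -> (forall i j, Q (Adr i j)) ->
  forall i j, Q (block_mx Aul Aur Adl Adr i j).
Proof.
move=> Qul Qur Qdl Qdr i j; rewrite -(splitK i) -(splitK j).
case: (split i) => i'; case: (split j) => j' /=.
- by rewrite block_mxEul.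
- by rewrite block_mxEur.
- by rewrite block_mxEdl.
- by rewrite block_mxEdr.
Qed.

Lemma block_mx_forall_diag m n (Aul : 'M[T]_m) (Aur : 'M[T]_(m, n))
    (Adl : 'M[T]_(n, m)) (Adr : 'M[T]_n) :
  (forall i, Q (Aul i i)) -> (forall i, Q (Adr i i)) ->
  forall i, Q (block_mx Aul Aur Adl Adr i i).
Proof.
move=> Qul Qdr i; rewrite -(splitK i); case: (split i) => i' /=.
- by rewrite block_mxEul.
- by rewrite block_mxEdr.
Qed.

End BlockEntries.

Lemma mx_nonneg_decomposition (R : realDomainType) n (A : 'M[R]_n) :
  exists P N : 'M[R]_n,
    [/\ forall i j, 0 <= P i j, forall i j, 0 <= N i j & A = P - N].
Proof.
exists (map_mx (Num.max 0) A), (map_mx (fun a => - Num.min 0 a) A).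
split=> [i j|i j|]; rewrite ?mxE.
- by rewrite le_max lexx.
- by rewrite oppr_ge0 ge_min lexx.
- by apply/matrixP=> i j; rewrite !mxE opprK addr_max_min add0r.
Qed.

Lemma purely_competitive_antidiag (R : realType) k (M : 'M[R]_k) :
  (forall i j, 0 <= M i j) -> purely_competitive (block_mx 0 (- M) (- M) 0).
Proof.
move=> M_ge0; split.
- move=> i j _; apply: (block_mx_forall (Q := fun x => x <= 0)) => a b;
    by rewrite mxE ?oppr_le0.
- by apply: (block_mx_forall_diag (Q := eq^~ 0)) => a; rewrite mxE.
Qed.

Theorem lemma4 (R : realType) (n : nat) (A : 'M[R]_n) :
  exists (m : nat) (B : 'M[R]_m) (T : 'M[R]_(m, n)),
    purely_competitive B /\
    injective (fun v : 'cV[R]_n => T *m v) /\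
    T *m A = B *m T.
Proof.
have [P [N [P_ge0 N_ge0 ->]]] := mx_nonneg_decomposition A.
pose M := block_mx P N N P.
have M_ge0 : forall i j, 0 <= M i j.
  by apply: (block_mx_forall (Q := fun x => 0 <= x)).
have [T [injT TA]] :=
  mx_embeds_trans (mx_embeds_block_sub P N) (mx_embeds_antidiag M).
exists _, (block_mx 0 (- M) (- M) 0), T.
by split; first exact: purely_competitive_antidiag.
Qed.
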